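(* Let $p=p(n)\in[0,1]$ and let $j=j(n)$, $k=k(n)$ be positive integer-valued functions of $n$. If $$\binom{n}{j}\binom{n}{k}\,p^{jk}\to 0\quad(n\to\infty),$$ then almost always $\|\mathcal{N}[G(n,p)]\|$ strong deformation retracts onto a subspace that is the geometric realization of a simplicial complex of dimension at most $j+k-3$.
   Context: For a graph $G$, the neighborhood complex $\mathcal{N}[G]$ is the simplicial complex on vertex set $V(G)$ whose faces are all subsets of $V(G)$ having a common neighbor. $\|\Delta\|$ denotes the geometric realization of a simplicial complex $\Delta$. $G(n,p)$ is the Erdős–Rényi random graph on vertex set $[n]$ with each possible edge present independently with probability $p$. A property holds almost always (a.a.) if its probability tends to $1$ as $n\to\infty$. *)

From HB Require Import structures.
From mathcomp Require Import all_boot all_order all_algebra.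
From mathcomp Require Import all_classical all_reals all_analysis.
Set Implicit Arguments. Unset Strict Implicit. Unset Printing Implicit Defensive.
Import Order.TTheory GRing.Theory Num.Theory.
Import numFieldNormedType.Exports.
Local Open Scope classical_set_scope.
Local Open Scope ring_scope.

Definition pairs (n : nat) : {set {set 'I_n}} := ([set e : {set 'I_n} | #|e| == 2%N])%SET.

Definition is_graph (n : nat) (E : {set {set 'I_n}}) : bool := E \subset pairs n.

Definition adj (n : nat) (E : {set {set 'I_n}}) (u v : 'I_n) : bool :=
  ([set u; v])%SET \in E.

Definition gnp_prob (R : realType) (n : nat) (p : R) (P : {set {set 'I_n}} -> Prop) : R :=
  \sum_(E : {set {set 'I_n}} | is_graph E && `[< P E >])
     p ^+ #|E| * (1 - p) ^+ (#|pairs n| - #|E|).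

Definition simplicial_complex (V : finType) (D : {set {set V}}) : Prop :=
  forall s t : {set V}, s \in D -> t \subset s -> t \in D.

(* dim D <= d, stated as: every face has at most d+1 vertices (dm1 = d+1). *)
Definition dim_le_succ (V : finType) (D : {set {set V}}) (dp1 : nat) : Prop :=
  forall s, s \in D -> (#|s| <= dp1)%N.

Definition nbhd_complex (n : nat) (E : {set {set 'I_n}}) : {set {set 'I_n}} :=
  ([set s : {set 'I_n} | [exists v, [forall u in s, adj E u v]]])%SET.

Definition realization (R : realType) (m : nat) (D : {set {set 'I_m}}) : set 'rV[R]_m :=
  [set x | (forall i, 0 <= x ord0 i) /\ \sum_i x ord0 i = 1 /\
           ([set i | x ord0 i != 0])%SET \in D].

Definition strong_def_retract (T : topologicalType) (R : realType) (X A : set T) : Prop :=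
  A `<=` X /\
  exists H : T * R -> T,
    {within X `*` `[0%R, 1%R]%classic, continuous H} /\
    (forall x t, X x -> `[0%R, 1%R]%classic t -> X (H (x, t))) /\
    (forall x, X x -> H (x, 0) = x) /\
    (forall x, X x -> A (H (x, 1))) /\
    (forall a t, A a -> `[0%R, 1%R]%classic t -> H (a, t) = a).

Definition homeomorphic (T U : topologicalType) (A : set T) (B : set U) : Prop :=
  exists (f : T -> U) (g : U -> T),
    {within A, continuous f} /\ {within B, continuous g} /\
    (forall x, A x -> B (f x)) /\ (forall y, B y -> A (g y)) /\
    (forall x, A x -> g (f x) = x) /\ (forall y, B y -> f (g y) = y).

(* ||N[G]|| strong deformation retracts onto a subspace which is (homeomorphic
   to) the geometric realization of a simplicial complex of dimension <= d,
   where dp1 = d + 1. *)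
Definition sdr_onto_complex_dim (R : realType) (n : nat) (E : {set {set 'I_n}})
    (dp1 : nat) : Prop :=
  exists A : set 'rV[R]_n,
    @strong_def_retract _ R (realization (R:=R) (nbhd_complex E)) A /\
    exists (m : nat) (D : {set {set 'I_m}}),
      simplicial_complex D /\ dim_le_succ D dp1 /\
      homeomorphic A (realization (R:=R) D).

From HB Require Import structures.
From mathcomp Require Import all_boot all_order all_algebra.
From mathcomp Require Import all_classical all_reals all_analysis.
From mathcomp Require Import zify.
Import Order.TTheory GRing.Theory Num.Theory.
Import numFieldNormedType.Exports.
Local Open Scope ring_scope.

(* A point x of ||N[G]|| is a staircase \sum_t c_t 1_t over the chain of its
   superlevel sets, all of which are faces.  Moving each step t to its closure
   N(N(t)), rescaled by #|t|/#|N(N(t))| to keep the coordinate sum, and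
   interpolating linearly retracts ||N[G]|| onto the points whose steps are all
   closed faces; these form a copy of the order complex of the nonempty closed
   faces.  Along a chain of distinct closed faces the faces grow and their
   common neighbourhoods shrink strictly, and a face with >= j vertices and
   >= k common neighbours spans a K_{j,k}; so if G has no K_{j,k} a chain has
   at most (j - 1) + (k - 1) members.  The expected number of K_{j,k} in
   G(n,p) is at most C(n,j) C(n,k) p^(jk), which tends to 0. *)

Set Implicit Arguments. Unset Strict Implicit. Unset Printing Implicit Defensive.

(* all_classical shadows these finset names. *)
Local Notation set0 := (@finset.set0 _).
Local Notation subsetP := fintype.subsetP.
Local Notation in_set0 := finset.in_set0.
Local Notation subset_trans := fintype.subset_trans.
Local Notation eqEsubset := finset.eqEsubset.
Local Notation in_setC := finset.in_setC.
Local Notation properEneq := finset.properEneq.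
Local Notation setX := finset.setX.
Local Notation subset0 := finset.subset0.

Lemma sum_pred1_mul (R : pzSemiRingType) (T : finType) (P : pred T) (s : T) (m : R) :
  \sum_(t | P t) (t == s)%:R * m = (P s)%:R * m.
Proof.
case: (boolP (P s)) => Ps.
  rewrite (bigD1 s) //= eqxx mul1r big1 ?addr0 // => t /andP [_ /negbTE ->].
  by rewrite mul0r.
rewrite mul0r big1 // => t Pt; case: eqP => [e|_]; last by rewrite mul0r.
by move: Ps; rewrite -e Pt.
Qed.

Lemma sum_nonzero (R : pzSemiRingType) (I : finType) (P : pred I) (F : I -> R) :
  \sum_(i | P i) F i != 0 -> exists2 i, P i & F i != 0.
Proof.
move=> h; apply/exists_inP; apply: contraNT h; rewrite negb_exists_in => /forall_inP h.
by rewrite big1 // => i /h /negPn /eqP.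
Qed.

Lemma nonzero_set0 (R : pzSemiRingType) (T : finType) (f : T -> R) :
  [set t | f t != 0] = set0 -> forall t, f t = 0.
Proof. by move=> f0 t; apply/eqP; have := in_set0 t; rewrite -f0 inE => /negbFE. Qed.

Lemma sum_mem_natr (R : pzSemiRingType) (T : finType) (t : {set T}) :
  \sum_i ((i \in t)%:R : R) = #|t|%:R.
Proof.
rewrite (bigID (mem t)) /= [X in _ + X]big1 ?addr0 => [|i /negbTE -> //].
by under eq_bigr => i -> do []; rewrite sumr_const.
Qed.

Lemma chain_has_max (T : finType) (S : {set {set T}}) :
  (forall s t, s \in S -> t \in S -> (s \subset t) || (t \subset s)) ->
  S != set0 -> exists2 s0, s0 \in S & forall t, t \in S -> t \subset s0.
Proof.
move=> chS /set0Pn [t0 t0S].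
case: (@arg_maxP _ _ _ t0 (fun t => t \in S) (fun t => #|t|) t0S) => s0 s0S s0max.
exists s0 => // t tS; case/orP: (chS _ _ tS s0S) => // s0t.
by have /eqP <- : s0 == t by rewrite eqEcard s0t; exact: s0max.
Qed.

Lemma chain_max_has_new_elt (T : finType) (S : {set {set T}}) s :
  (forall a b, a \in S -> b \in S -> (a \subset b) || (b \subset a)) ->
  s \in S -> s != set0 -> (forall t, t \in S -> t \subset s) ->
  exists2 u, u \in s & forall t, t \in S :\ s -> u \notin t.
Proof.
move=> chS sS sn s_max; have [S'0|S'n] := eqVneq (S :\ s) set0.
  by have /set0Pn [u us] := sn; exists u => // t; rewrite S'0 in_set0.
have chS' a b : a \in S :\ s -> b \in S :\ s -> (a \subset b) || (b \subset a).
  by move=> /setD1P [_ aS] /setD1P [_ bS]; exact: chS.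
have [s1 /setD1P [s1s s1S] s1_max] := chain_has_max chS' S'n.
have /properP [_ [u us us1]] : s1 \proper s by rewrite properEneq s1s s_max.
by exists u => // t /s1_max /subsetP t_s1; exact: contra (t_s1 u) us1.
Qed.

Section Staircase.
Variables (R : realFieldType) (n : nat).
Implicit Types (x : 'I_n -> R) (s t : {set 'I_n}).

Definition in_unit_cube x := forall i, 0 <= x i <= 1.

Definition min_in x t : R := \big[Num.min/1]_(i in t) x i.
Definition max_out x t : R := \big[Num.max/0]_(i in ~: t) x i.

(* The height of the step at t of x seen as a staircase [\sum_t gap x t *: 1_t]
   over its superlevel sets (see [sum_gap_mem]). *)
Definition gap x t : R := if t == set0 then 0 else Num.max 0 (min_in x t - max_out x t).

Lemma min_in_le x t i : i \in t -> min_in x t <= x i.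
Proof. exact: bigmin_le_cond. Qed.

Lemma min_in_attained x t : in_unit_cube x -> t != set0 ->
  exists2 i, i \in t & min_in x t = x i.
Proof.
move=> x01 /set0Pn [j jt].
have [i it eq_min] := @eq_bigmin _ _ _ 1 j (mem t) x jt (fun i _ => (andP (x01 i)).2).
by exists i => //; exact: eq_min.
Qed.

Lemma max_out_ge x t i : i \notin t -> x i <= max_out x t.
Proof. by move=> it; apply: le_bigmax_cond; rewrite inE. Qed.

Lemma max_out_ge0 x t : 0 <= max_out x t.
Proof. exact: bigmax_ge_id. Qed.

Lemma max_out_attained x t : in_unit_cube x ->
  max_out x t = 0 \/ exists2 i, i \notin t & max_out x t = x i.
Proof.
move=> x01; case: (boolP [exists i, i \notin t]) => [/existsP [j jt]|].
  have jt' : j \in ~: t by rewrite inE.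
  have [i it eq_max] := @eq_bigmax _ _ _ 0 j (mem (~: t)) x jt' (fun i _ => (andP (x01 i)).1).
  by right; exists i; [rewrite -in_setC | exact: eq_max].
rewrite negb_exists => /forallP tT; left; apply: bigmax_eq_id => i.
by rewrite inE (negbTE (tT i)).
Qed.

Lemma gap_ge0 x t : 0 <= gap x t.
Proof. by rewrite /gap; case: ifP => // _; rewrite le_max lexx. Qed.

Lemma gap_set0 x : gap x set0 = 0.
Proof. by rewrite /gap eqxx. Qed.

Lemma gapE x t : t != set0 -> gap x t = Num.max 0 (min_in x t - max_out x t).
Proof. by rewrite /gap => /negbTE ->. Qed.

Lemma gap_gt0P x t : 0 < gap x t ->
  [/\ t != set0, forall i, i \in t -> 0 < x i &
      forall i j, i \in t -> j \notin t -> x j < x i].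
Proof.
rewrite /gap; case: eqP => [_|/eqP tn]; first by rewrite ltxx.
rewrite lt_max ltxx /= subr_gt0 => lt_out_in.
split=> // [i it|i j it jt].
  exact: le_lt_trans (max_out_ge0 _ _) (lt_le_trans lt_out_in (min_in_le _ it)).
exact: le_lt_trans (max_out_ge _ jt) (lt_le_trans lt_out_in (min_in_le _ it)).
Qed.

Lemma gap_eq0_at_zero x t a : a \in t -> x a = 0 -> gap x t = 0.
Proof.
move=> at0 xa0; apply/eqP; rewrite eq_le gap_ge0 andbT leNgt.
by apply/negP => /gap_gt0P [_ /(_ a at0)]; rewrite xa0 ltxx.
Qed.

Lemma gap_zero x t : (forall i, x i = 0) -> gap x t = 0.
Proof.
move=> x0; case: (eqVneq t set0) => [->|/set0Pn [a at0]]; first exact: gap_set0.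
exact: gap_eq0_at_zero at0 (x0 a).
Qed.

Lemma gap_gt0_chain x s t : 0 < gap x s -> 0 < gap x t -> (s \subset t) || (t \subset s).
Proof.
move=> /gap_gt0P [_ _ hs] /gap_gt0P [_ _ ht].
case: (boolP (s \subset t)) => //= /subsetPn [u us ut].
apply/subsetP => v vt; apply/negPn/negP => vs.
by have := lt_trans (ht _ _ vt ut) (hs _ _ us vs); rewrite ltxx.
Qed.

Lemma min_in_shift x x' t m : in_unit_cube x -> in_unit_cube x' -> t != set0 ->
  (forall i, i \in t -> x i = x' i + m) -> min_in x t = min_in x' t + m.
Proof.
move=> x01 x'01 tn ex; apply: le_anti; apply/andP; split.
  by have [a at0 ->] := min_in_attained x'01 tn; rewrite -ex // min_in_le.
by have [b bt ->] := min_in_attained x01 tn; rewrite ex // lerD2r min_in_le.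
Qed.

Lemma gap_shift x x' s u m : in_unit_cube x -> in_unit_cube x' ->
  (forall i, i \notin s -> x' i = 0) -> u \in s -> x' u = 0 -> 0 < m ->
  (forall i, x i = x' i + (i \in s)%:R * m) ->
  forall t, gap x t = gap x' t + (t == s)%:R * m.
Proof.
move=> x01 x'01 x'out us x'u m0 ex t.
have sn : s != set0 by apply/set0Pn; exists u.
have xout i : i \notin s -> x i = 0.
  by move=> iS; rewrite ex x'out // (negbTE iS) mul0r addr0.
have xin i : i \in s -> x i = x' i + m by move=> iS; rewrite ex iS mul1r.
case: (eqVneq t set0) => [->|tn].
  by rewrite !gap_set0 add0r eq_sym (negbTE sn) mul0r.
case: (eqVneq t s) => [->|tns].
  have min_x' : min_in x' s = 0.
    apply: le_anti; rewrite -{1}x'u min_in_le //=.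
    by have [a _ ->] := min_in_attained x'01 sn; case/andP: (x'01 a).
  have max_out0 y : (forall i, i \notin s -> y i = 0) -> max_out y s = 0.
    by move=> y0; apply: bigmax_eq_id => i; rewrite inE => /y0 ->.
  rewrite mul1r !gapE // (min_in_shift x01 x'01 sn xin) min_x' !max_out0 //.
  by rewrite !subr0 add0r maxxx add0r; apply/max_idPr/ltW.
rewrite mul0r addr0.
case: (boolP (t \subset s)) => [ts|/subsetPn [a at0 aS]]; last first.
  by rewrite (gap_eq0_at_zero at0 (xout _ aS)) (gap_eq0_at_zero at0 (x'out _ aS)).
have [w ws wt] : exists2 w, w \in s & w \notin t.
  by have /properP [_] : t \proper s by rewrite properEneq tns.
have max_shift : max_out x t = max_out x' t + m.
  have x'w0 : 0 <= x' w by case/andP: (x'01 w).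
  apply: le_anti; apply/andP; split.
    case: (max_out_attained t x01) => [->|[j jt ->]].
      by rewrite addr_ge0 ?max_out_ge0 ?ltW.
    case: (boolP (j \in s)) => js; first by rewrite xin // lerD2r max_out_ge.
    by rewrite xout // addr_ge0 ?max_out_ge0 ?ltW.
  case: (max_out_attained t x'01) => [->|[j jt ->]].
    by rewrite add0r (le_trans _ (max_out_ge x wt)) // xin // lerDr.
  case: (boolP (j \in s)) => js; first by rewrite -xin // max_out_ge.
  by rewrite x'out // add0r (le_trans _ (max_out_ge x wt)) // xin // lerDr.
rewrite !gapE // (min_in_shift x01 x'01 tn (fun i it => xin i (subsetP ts i it))).
by rewrite max_shift opprD addrACA subrr addr0.
Qed.

Definition support x : {set 'I_n} := [set i | x i != 0].

Lemma sum_gap_mem x : in_unit_cube x ->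
  forall i, \sum_(t : {set 'I_n} | i \in t) gap x t = x i.
Proof.
move: {2}#|support x| (leqnn #|support x|) => k.
elim: k x => [|k IH] x suppk x01 i; have [supp0|sn] := eqVneq (support x) set0.
1,3: by rewrite big1 ?(nonzero_set0 supp0) // => t _; apply/gap_zero/nonzero_set0.
  by move: suppk; rewrite leqn0 cards_eq0 (negbTE sn).
set s := support x in sn suppk *.
have [u us xu] := min_in_attained x01 sn.
set m := min_in x s in xu.
have m0 : 0 < m by rewrite xu lt_def; move: us; rewrite inE => ->; case/andP: (x01 u).
pose x' i := x i - (i \in s)%:R * m.
have x'out j : j \notin s -> x' j = 0.
  by rewrite /x' => jS; rewrite (negbTE jS) mul0r subr0; move: jS; rewrite inE negbK => /eqP.
have x'01 : in_unit_cube x'.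
  move=> j; rewrite /x'; case: (boolP (j \in s)) => js; last by rewrite mul0r subr0.
  rewrite mul1r subr_ge0 (min_in_le _ js) /=; case/andP: (x01 j) => _ xj1.
  by rewrite (le_trans _ xj1) // lerBlDr lerDl ltW.
have x'u : x' u = 0 by rewrite /x' us mul1r xu subrr.
have ex j : x j = x' j + (j \in s)%:R * m by rewrite /x' subrK.
have supp'k : (#|support x'| <= k)%N.
  have supp'_sub : support x' \subset s :\ u.
    apply/subsetP => j; rewrite !inE => x'j; apply/andP; split.
      by apply: contraNneq x'j => ->; rewrite x'u.
    by apply: contraNneq x'j => /eqP xj0; rewrite x'out // inE xj0.
  move: suppk; rewrite (cardsD1 u s) us add1n ltnS.
  exact: leq_trans (subset_leq_card supp'_sub).
under eq_bigr => t _ do rewrite (gap_shift x01 x'01 x'out us x'u m0 ex t).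
by rewrite big_split /= (IH x' supp'k x'01 i) sum_pred1_mul ex.
Qed.

Definition indicator_sum (w : {set 'I_n} -> R) : 'I_n -> R :=
  fun i => \sum_t w t * (i \in t)%:R.

Lemma indicator_sum_ge0 (w : {set 'I_n} -> R) i :
  (forall t, 0 <= w t) -> 0 <= indicator_sum w i.
Proof. by move=> w0; apply: sumr_ge0 => t _; rewrite mulr_ge0 ?ler0n. Qed.

Lemma sum_indicator_sum (w : {set 'I_n} -> R) :
  \sum_i indicator_sum w i = \sum_t w t * #|t|%:R.
Proof.
rewrite /indicator_sum exchange_big /=; apply: eq_bigr => t _.
by rewrite -sum_mem_natr mulr_sumr.
Qed.

Lemma indicator_sum_neq0 (w : {set 'I_n} -> R) i :
  indicator_sum w i != 0 -> exists2 t, w t != 0 & i \in t.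
Proof.
case/sum_nonzero => t _; rewrite mulf_eq0 negb_or pnatr_eq0 eqb0 negbK.
by case/andP; exists t.
Qed.

Lemma indicator_sum_eq0 (w : {set 'I_n} -> R) i :
  (forall t, w t != 0 -> i \notin t) -> indicator_sum w i = 0.
Proof.
move=> w_notin; rewrite /indicator_sum big1 // => t _.
by have [->|/w_notin /negbTE ->] := eqVneq (w t) 0; rewrite ?mul0r ?mulr0.
Qed.

Lemma indicator_sum_gap x : in_unit_cube x -> indicator_sum (gap x) = x.
Proof.
move=> x01; apply: funext => i; rewrite -(sum_gap_mem x01 i) [RHS]big_mkcond.
by apply: eq_bigr => t _; case: (i \in t); rewrite ?mulr1 ?mulr0.
Qed.

Lemma gap_gt0E x s : (0 < gap x s) = (gap x s != 0).
Proof. by rewrite lt_def gap_ge0 andbT. Qed.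

Lemma gap_gt0_sub_support x s : 0 < gap x s -> s \subset support x.
Proof.
case/gap_gt0P => _ x_pos _; apply/subsetP => i is0; rewrite inE.
by have := x_pos i is0; rewrite lt_def => /andP [].
Qed.

Definition chain_supported (w : {set 'I_n} -> R) :=
  forall s t, w s != 0 -> w t != 0 -> (s \subset t) || (t \subset s).

Lemma gap_indicator_sum (w : {set 'I_n} -> R) : (forall t, 0 <= w t) -> w set0 = 0 ->
  chain_supported w -> in_unit_cube (indicator_sum w) -> gap (indicator_sum w) =1 w.
Proof.
move: {2}#|[set t | w t != 0]| (leqnn #|[set t | w t != 0]|) => k.
elim: k w => [|k IH] w Sk w_ge0 w_set0 w_chain w01 t;
  set S := [set t | w t != 0] in Sk *; have [S0|Sn] := eqVneq S set0.
1,3: rewrite (nonzero_set0 S0); apply: gap_zero => i.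
1,2: by rewrite /indicator_sum big1 // => s _; rewrite (nonzero_set0 S0) mul0r.
  by move: Sk; rewrite leqn0 cards_eq0 (negbTE Sn).
have chS a b : a \in S -> b \in S -> (a \subset b) || (b \subset a).
  by rewrite !inE; exact: w_chain.
have [s sS s_max] := chain_has_max chS Sn.
have ws : w s != 0 by move: sS; rewrite inE.
have m0 : 0 < w s by rewrite lt_def ws w_ge0.
have [u us u_new] : exists2 u, u \in s & forall a, a \in S :\ s -> u \notin a.
  by apply: chain_max_has_new_elt chS sS _ s_max; apply: contra_neq ws => ->.
pose w' a := if a == s then 0 else w a.
have w'_ge0 a : 0 <= w' a by rewrite /w'; case: ifP.
have w'_set0 : w' set0 = 0 by rewrite /w'; case: ifP.
have w'S a : w' a != 0 -> a \in S :\ s.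
  by rewrite /w' !inE; case: (eqVneq a s) => //= _; rewrite eqxx.
have w'_chain : chain_supported w'.
  by move=> a b /w'S /setD1P [_ aS] /w'S /setD1P [_ bS]; apply: chS.
have S'k : (#|[set a | (w' a != 0)%R]| <= k)%N.
  have S'_sub : [set a | w' a != 0] \subset S :\ s.
    by apply/subsetP => a; rewrite inE; exact: w'S.
  move: Sk; rewrite (cardsD1 s S) sS add1n ltnS.
  exact: leq_trans (subset_leq_card S'_sub).
have ex i : indicator_sum w i = indicator_sum w' i + (i \in s)%:R * w s.
  rewrite /indicator_sum (bigD1 s) //= [in RHS](bigD1 s) //= /w' eqxx mul0r add0r.
  rewrite addrC mulrC; congr (_ + _); apply: eq_bigr => a /negbTE -> //.
have w'_out i : i \notin s -> indicator_sum w' i = 0.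
  move=> iS; apply: indicator_sum_eq0 => a /w'S /setD1P [_ aS].
  exact: contra (subsetP (s_max a aS) i) iS.
have w'u : indicator_sum w' u = 0 by apply: indicator_sum_eq0 => a /w'S; exact: u_new.
have w'01 : in_unit_cube (indicator_sum w').
  move=> i; rewrite indicator_sum_ge0 //=; case/andP: (w01 i) => _ /(le_trans _); apply.
  by rewrite ex lerDl mulr_ge0 ?ler0n ?ltW.
rewrite (gap_shift w01 w'01 w'_out us w'u m0 ex t) (IH w' S'k w'_ge0 w'_set0 w'_chain w'01 t).
by rewrite /w'; case: eqP => [->|_]; rewrite ?mul1r ?add0r ?mul0r ?addr0.
Qed.

End Staircase.

Lemma card_le_of_inj_range (U : finType) (F : {set U}) (f : U -> nat) (m : nat) :
  {in F &, injective f} -> (forall s, s \in F -> 0 < f s < m)%N -> (#|F| <= m.-1)%N.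
Proof.
move=> f_inj f_range; rewrite cardE -(size_map f) -(size_iota 1 m.-1).
apply: uniq_leq_size.
  by rewrite map_inj_in_uniq ?enum_uniq // => s t; rewrite !mem_enum; exact: f_inj.
move=> _ /mapP [s sF ->]; rewrite mem_enum in sF.
by rewrite mem_iota; have := f_range s sF; lia.
Qed.

Lemma exists_subset_card (T : finType) (A : {set T}) (k : nat) : (k <= #|A|)%N ->
  exists2 B : {set T}, B \subset A & #|B| = k.
Proof.
move=> kA; have : (0 < #|[set B : {set T} | B \subset A & #|B| == k]|)%N.
  by rewrite cards_draws bin_gt0.
by case/card_gt0P => B; rewrite inE => /andP [BA /eqP Bk]; exists B.
Qed.

Section NeighborhoodClosure.
Variables (T : finType) (a : rel T).
Hypothesis a_sym : symmetric a.
Implicit Types (s t : {set T}).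

Definition common_nbrs s : {set T} := [set v | [forall u in s, a u v]].
Definition nbr_closure s := common_nbrs (common_nbrs s).
Definition has_common_nbr s := common_nbrs s != set0.

Definition biclique_free (j k : nat) := ~ exists A B : {set T},
  [/\ #|A| = j, #|B| = k & forall u v, u \in A -> v \in B -> a u v].

Lemma common_nbrsP s v : reflect (forall u, u \in s -> a u v) (v \in common_nbrs s).
Proof. by rewrite inE; apply: (iffP forall_inP). Qed.

Lemma common_nbrs_anti s t : s \subset t -> common_nbrs t \subset common_nbrs s.
Proof.
move=> st; apply/subsetP => v /common_nbrsP tv; apply/common_nbrsP => u us.
exact/tv/(subsetP st).
Qed.

Lemma sub_nbr_closure s : s \subset nbr_closure s.
Proof.
by apply/subsetP => u us; apply/common_nbrsP => v /common_nbrsP sv; rewrite a_sym sv.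
Qed.

Lemma nbr_closure_mono s t : s \subset t -> nbr_closure s \subset nbr_closure t.
Proof. by move=> st; do 2!apply: common_nbrs_anti. Qed.

Lemma common_nbrs_closure s : common_nbrs (nbr_closure s) = common_nbrs s.
Proof.
by apply/eqP; rewrite eqEsubset common_nbrs_anti ?sub_nbr_closure.
Qed.

Lemma nbr_closure_idem s : nbr_closure (nbr_closure s) = nbr_closure s.
Proof. by rewrite /nbr_closure -/(nbr_closure s) common_nbrs_closure. Qed.

Lemma nbr_closure_neq0 s : s != set0 -> nbr_closure s != set0.
Proof. by apply: contra_neq => cs0; apply/eqP; rewrite -subset0 -cs0 sub_nbr_closure. Qed.

Lemma has_common_nbr_closure s : has_common_nbr s -> has_common_nbr (nbr_closure s).
Proof. by rewrite /has_common_nbr common_nbrs_closure. Qed.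

Lemma has_common_nbrS s t : t \subset s -> has_common_nbr s -> has_common_nbr t.
Proof.
move=> ts /set0Pn [v vs]; apply/set0Pn; exists v.
exact: (subsetP (common_nbrs_anti ts)).
Qed.

Lemma chain_eq_card s t : (s \subset t) || (t \subset s) -> #|s| = #|t| -> s = t.
Proof.
case/orP => [st|ts] e; apply/eqP; first by rewrite eqEcard st e leqnn.
by rewrite eq_sym eqEcard ts e leqnn.
Qed.

Lemma card_closed_face_chain (j k : nat) (F : {set {set T}}) :
  (0 < j)%N -> (0 < k)%N -> biclique_free j k ->
  (forall s, s \in F -> [/\ s != set0, nbr_closure s = s & has_common_nbr s]) ->
  (forall s t, s \in F -> t \in F -> (s \subset t) || (t \subset s)) ->
  (#|F| <= j + k - 2)%N.
Proof.
move=> j0 k0 noK F_faces F_chain.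
pose small := [set s in F | (#|s| < j)%N].
pose large := [set s in F | ~~ (#|s| < j)%N].
have card_small : (#|small| <= j.-1)%N.
  apply: card_le_of_inj_range => [s t|s].
    by rewrite !inE => /andP [sF _] /andP [tF _]; exact/chain_eq_card/F_chain.
  rewrite inE => /andP [sF ->]; rewrite andbT card_gt0.
  by case: (F_faces s sF).
have card_large : (#|large| <= k.-1)%N.
  apply: (@card_le_of_inj_range _ _ (fun s => #|common_nbrs s|)) => [s t|s].
    rewrite !inE => /andP [sF _] /andP [tF _] /chain_eq_card eq_nbrs.
    have [_ cls _] := F_faces s sF; have [_ clt _] := F_faces t tF.
    rewrite -cls -clt /nbr_closure eq_nbrs //.
    case/orP: (F_chain s t sF tF) => st; apply/orP; [right|left];
      exact: common_nbrs_anti.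
  rewrite inE -leqNgt => /andP [sF js]; have [_ _ s_face] := F_faces s sF.
  rewrite card_gt0 ltnNge; apply/andP; split; first exact: s_face.
  apply/negP => kv; apply: noK.
  have [S Ss Sj] := exists_subset_card js; have [V Vv Vk] := exists_subset_card kv.
  exists S, V; split=> // u v uS vV.
  exact: (common_nbrsP _ _ (subsetP Vv v vV)) (subsetP Ss u uS).
rewrite -(cardsID [set s : {set T} | (#|s| < j)%N] F).
have -> : F :&: [set s : {set T} | (#|s| < j)%N] = small by apply/setP => s; rewrite !inE andbC.
have -> : F :\: [set s : {set T} | (#|s| < j)%N] = large by apply/setP => s; rewrite !inE andbC.
by move: card_small card_large; rewrite -!subn1; move: #|small| #|large|; lia.
Qed.

End NeighborhoodClosure.

Section BernoulliWeight.
Variables (R : comPzRingType) (T : finType) (p : R).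
Implicit Types (U E F : {set T}).

Definition bernoulli_weight U E : R := p ^+ #|E| * (1 - p) ^+ (#|U| - #|E|).

Lemma sum_bernoulli_weight U : \sum_(E : {set T} | E \subset U) bernoulli_weight U E = 1.
Proof.
set N := #|U|; have -> : 1 = (1 - p + p) ^+ N :> R by rewrite subrK expr1n.
rewrite exprDn (partition_big (fun E => inord #|E| : 'I_N.+1) xpredT) //=.
apply: eq_bigr => i _.
rewrite (eq_bigl (mem [set E : {set T} | E \subset U & #|E| == i])); last first.
  move=> E; rewrite !inE; apply: andb_id2l => EU.
  have EN : (#|E| < N.+1)%N by rewrite ltnS subset_leq_card.
  by rewrite -(inj_eq val_inj) /= inordK.
rewrite (eq_bigr (fun=> p ^+ i * (1 - p) ^+ (N - i))); last first.
  by move=> E; rewrite !inE /bernoulli_weight => /andP [_ /eqP ->].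
by rewrite sumr_const cards_draws mulrC.
Qed.

Lemma sum_bernoulli_weight_supsets U F : F \subset U ->
  \sum_(E : {set T} | (E \subset U) && (F \subset E)) bernoulli_weight U E = p ^+ #|F|.
Proof.
move=> FU; rewrite -[RHS]mulr1 -(sum_bernoulli_weight (U :\: F)) mulr_sumr.
rewrite (reindex_onto (fun E => F :|: E) (fun E => E :\: F)) /=; last first.
  move=> E /andP [_ FE]; rewrite finset.setDE finset.setUIr finset.setUCr finset.setIT.
  exact/finset.setUidPr.
have sub_diff E : ((F :|: E \subset U) && (F \subset F :|: E)) && ((F :|: E) :\: F == E)
    = (E \subset U :\: F).
  rewrite subsetD finset.subUset FU finset.subsetUl andbT /=.
  rewrite finset.setDUl finset.setDv finset.set0U.
  by congr (_ && _); apply/eqP/idP => /finset.setDidPl.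
apply: eq_big => E; first exact: sub_diff.
rewrite sub_diff subsetD => /andP [EU EF]; rewrite /bernoulli_weight.
rewrite cardsU finset.setIC (disjoint_setI0 EF) cards0 subn0.
by rewrite cardsD (finset.setIidPr FU) exprD subnDA mulrA.
Qed.

End BernoulliWeight.

Section Continuity.
Variables (R : realType) (T : topologicalType).

Lemma continuous_bigmin (I : Type) (r : seq I) (P : pred I) (c : R) (F : I -> T -> R) :
  (forall i, continuous (F i)) -> continuous (fun x => \big[Num.min/c]_(i <- r | P i) F i x).
Proof.
move=> F_cont; apply: continuous_big => [z|i _]; last exact: F_cont.
by apply: (@continuous_min R _ fst snd z); [exact: cvg_fst | exact: cvg_snd].
Qed.

Lemma continuous_bigmax (I : Type) (r : seq I) (P : pred I) (c : R) (F : I -> T -> R) :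
  (forall i, continuous (F i)) -> continuous (fun x => \big[Num.max/c]_(i <- r | P i) F i x).
Proof.
move=> F_cont; apply: continuous_big => [z|i _]; last exact: F_cont.
by apply: (@continuous_max R _ fst snd z); [exact: cvg_fst | exact: cvg_snd].
Qed.

Lemma continuous_sum (V : normedModType R) (I : Type) (r : seq I) (P : pred I)
    (F : I -> T -> V) :
  (forall i, continuous (F i)) -> continuous (fun x => \sum_(i <- r | P i) F i x).
Proof. by move=> F_cont; apply: continuous_big => [|i _]; [exact: add_continuous | exact: F_cont]. Qed.

Lemma continuous_mx (m p : nat) (F : T -> 'M[R]_(m, p)) :
  (forall i j, continuous (fun z => F z i j)) -> continuous F.
Proof.
move=> F_cont; rewrite (_ : F = fun z => \sum_i \sum_j F z i j *: delta_mx i j).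
  by do 2!apply: continuous_sum => ?; move=> z; apply: continuousZr_tmp; exact: F_cont.
by apply: funext => z; exact: matrix_sum_delta.
Qed.

End Continuity.

Section Retraction.
Variables (R : realType) (n : nat) (E : {set {set 'I_n}}).
Implicit Types (x y : 'rV[R]_n) (s t : {set 'I_n}).

Local Notation closure := (nbr_closure (adj E)).
Local Notation has_nbr := (has_common_nbr (adj E)).
Local Notation X := (realization (nbhd_complex E)).

Lemma adj_sym : symmetric (adj E).
Proof. by move=> u v; rewrite /adj finset.setUC. Qed.

Lemma mem_nbhd_complex s : (s \in nbhd_complex E) = has_nbr s.
Proof.
rewrite inE /has_common_nbr.
by apply/existsP/set0Pn => [] [v vP]; exists v; move: vP; rewrite inE.
Qed.

Definition coords x : 'I_n -> R := fun i => x ord0 i.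

Lemma realization_unit_cube x : X x -> in_unit_cube (coords x).
Proof.
case=> x_ge0 [x_sum _] i; rewrite x_ge0 /= -x_sum (bigD1 i) //= lerDl.
exact: sumr_ge0.
Qed.

Definition closure_step x s : R := gap (coords x) s * #|s|%:R / #|closure s|%:R.
Definition closure_weight x t : R := \sum_(s | closure s == t) closure_step x s.
Definition retraction x : 'rV[R]_n := \row_i indicator_sum (closure_weight x) i.
Definition homotopy x (t : R) : 'rV[R]_n := (1 - t) *: x + t *: retraction x.

Definition closed_staircases : set 'rV[R]_n :=
  [set y | X y /\ forall s, 0 < gap (coords y) s -> closure s = s].

Lemma coords_retraction x : coords (retraction x) = indicator_sum (closure_weight x).
Proof. by apply: funext => i; rewrite /coords mxE. Qed.

Lemma closure_step_ge0 x s : 0 <= closure_step x s.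
Proof. by rewrite /closure_step divr_ge0 ?mulr_ge0 ?gap_ge0. Qed.

Lemma closure_weight_ge0 x t : 0 <= closure_weight x t.
Proof. by apply: sumr_ge0 => s _; exact: closure_step_ge0. Qed.

Lemma closure_step_neq0 x s : closure_step x s != 0 -> 0 < gap (coords x) s.
Proof.
rewrite /closure_step lt_def gap_ge0 andbT; apply: contraNN => /eqP ->.
by rewrite !mul0r.
Qed.

Lemma closure_stepK x s : closure_step x s * #|closure s|%:R = gap (coords x) s * #|s|%:R.
Proof.
have [->|sn] := eqVneq s set0; first by rewrite /closure_step gap_set0 !mul0r.
by rewrite /closure_step mulfVK // pnatr_eq0 cards_eq0 nbr_closure_neq0 //; exact: adj_sym.
Qed.

Lemma closure_weight_set0 x : closure_weight x set0 = 0.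
Proof.
rewrite /closure_weight big1 // => s /eqP cs0.
have /eqP -> : s == set0 by apply: contraTT (eqxx (closure s)) => /(nbr_closure_neq0 adj_sym); rewrite cs0.
by rewrite /closure_step gap_set0 !mul0r.
Qed.

Lemma closure_weight_neq0 x t : closure_weight x t != 0 ->
  exists2 s, closure s = t & 0 < gap (coords x) s.
Proof. by case/sum_nonzero => s /eqP cs /closure_step_neq0; exists s. Qed.

Lemma closure_weight_chain x : chain_supported (closure_weight x).
Proof.
move=> t1 t2 /closure_weight_neq0 [s1 <- g1] /closure_weight_neq0 [s2 <- g2].
by case/orP: (gap_gt0_chain g1 g2) => s12; apply/orP; [left|right];
  exact: nbr_closure_mono.
Qed.

Lemma sum_retraction x : in_unit_cube (coords x) ->
  \sum_i coords (retraction x) i = \sum_i coords x i.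
Proof.
move=> x01; rewrite coords_retraction sum_indicator_sum.
rewrite -[in RHS](indicator_sum_gap x01) sum_indicator_sum.
rewrite [RHS](partition_big closure xpredT) //=; apply: eq_bigr => t _.
by rewrite /closure_weight mulr_suml; apply: eq_bigr => s /eqP <-; exact: closure_stepK.
Qed.

Lemma support_retraction x : support (coords (retraction x)) \subset closure (support (coords x)).
Proof.
apply/subsetP => i; rewrite inE coords_retraction => /indicator_sum_neq0 [t].
case/closure_weight_neq0 => s <- /gap_gt0_sub_support s_supp it.
exact: subsetP (nbr_closure_mono (adj E) s_supp) i it.
Qed.

Lemma coords_homotopy x (t : R) i :
  coords (homotopy x t) i = (1 - t) * coords x i + t * coords (retraction x) i.
Proof. by rewrite /coords !mxE. Qed.

Lemma homotopy_realization x (t : R) : X x -> 0 <= t <= 1 -> X (homotopy x t).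
Proof.
move=> Xx /andP [t0 t1]; have x01 := realization_unit_cube Xx.
have [_ [x_sum x_face]] := Xx.
have x_ge0 i : 0 <= coords x i by case/andP: (x01 i).
have r_ge0 i : 0 <= coords (retraction x) i.
  by rewrite coords_retraction indicator_sum_ge0 // => s; exact: closure_weight_ge0.
split; [|split].
- by move=> i; rewrite -/(coords _ i) coords_homotopy addr_ge0 ?mulr_ge0 ?subr_ge0 ?x_ge0.
- under eq_bigr => i _ do rewrite -/(coords _ i) coords_homotopy.
  rewrite big_split /= -!mulr_sumr sum_retraction //.
  by rewrite -/(coords x) in x_sum; rewrite x_sum !mulr1 subrK.
rewrite mem_nbhd_complex; apply: (@has_common_nbrS _ _ (closure (support (coords x)))).
  apply/subsetP => i; rewrite inE -/(coords _ i) coords_homotopy.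
  have [xi0|xi0] := eqVneq (coords x i) 0; last first.
    by move=> _; apply: (subsetP (sub_nbr_closure adj_sym _)); rewrite inE.
  rewrite xi0 mulr0 add0r mulf_eq0 negb_or => /andP [_ ri0].
  by apply: (subsetP (support_retraction x)); rewrite inE.
by apply: (has_common_nbr_closure adj_sym); rewrite -mem_nbhd_complex.
Qed.

Lemma homotopy0 x : homotopy x 0 = x.
Proof. by rewrite /homotopy subr0 scale1r scale0r addr0. Qed.

Lemma homotopy1 x : homotopy x 1 = retraction x.
Proof. by rewrite /homotopy subrr scale0r add0r scale1r. Qed.

Lemma retraction_closed x : X x -> closed_staircases (retraction x).
Proof.
move=> Xx; have Xr : X (retraction x).
  by rewrite -homotopy1; apply: homotopy_realization; rewrite ?ler01 ?lexx.
split=> // s; have r01 := realization_unit_cube Xr; rewrite coords_retraction in r01 *.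
rewrite gap_indicator_sum //; last exact: closure_weight_chain.
- by rewrite lt0r => /andP [/closure_weight_neq0 [u <- _] _]; exact: (nbr_closure_idem adj_sym).
- exact: closure_weight_ge0.
- exact: closure_weight_set0.
Qed.

Lemma retraction_id y : closed_staircases y -> retraction y = y.
Proof.
case=> Xy y_closed; have y01 := realization_unit_cube Xy.
have weight_gap t : closure_weight y t = gap (coords y) t.
  have step s : closure s == t -> closure_step y s = (s == t)%:R * gap (coords y) t.
    move=> /eqP cs; have [gs|] := boolP (0 < gap (coords y) s); last first.
      rewrite gap_gt0E negbK /closure_step => /eqP gs0; rewrite gs0 !mul0r.
      by case: eqP => [<-|_]; rewrite ?gs0 ?mulr0 ?mul0r.
    have css := y_closed s gs; rewrite css in cs; subst t.
    have sn : (#|s|%:R : R) != 0 by rewrite pnatr_eq0 cards_eq0; case/gap_gt0P: gs.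
    by rewrite eqxx mul1r /closure_step css mulfK.
  rewrite /closure_weight (eq_bigr _ step) sum_pred1_mul.
  have [ct|ct] := eqVneq (closure t) t; first by rewrite mul1r.
  rewrite mul0r; apply/esym/eqP; rewrite -[_ == 0]negbK -gap_gt0E.
  by apply/negP => /y_closed; apply/eqP.
by apply/rowP => i; rewrite mxE (funext weight_gap) indicator_sum_gap.
Qed.

Lemma continuous_gap s : continuous (fun y : 'rV[R]_n => gap (coords y) s).
Proof.
rewrite /gap; case: eqP => _; first exact: cst_continuous.
move=> y; apply: (@continuous_max R _ (fun=> 0)
  (fun y => min_in (coords y) s - max_out (coords y) s)); first exact: cst_continuous.
apply: continuousB;
  [apply: (continuous_bigmin (F := fun i y => y ord0 i))
  |apply: (continuous_bigmax (F := fun i y => y ord0 i))] => i; exact: coord_continuous.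
Qed.

Lemma continuous_retraction : continuous retraction.
Proof.
apply: continuous_mx => i j; under eq_fun do rewrite mxE.
apply: continuous_sum => t y; apply: (@continuousM R _ _ (fun=> _)); last exact: cst_continuous.
apply: continuous_sum => s {}y; rewrite /closure_step.
apply: (@continuousM R _ (fun y => gap (coords y) s * _) (fun=> _));
  last exact: cst_continuous.
apply: (@continuousM R _ (fun y => gap (coords y) s) (fun=> _)); last exact: cst_continuous.
exact: continuous_gap.
Qed.

Lemma continuous_homotopy : continuous (fun z : 'rV[R]_n * R => homotopy z.1 z.2).
Proof.
move=> z; rewrite /homotopy.
apply: (@continuousD R _ _ (fun z : 'rV[R]_n * R => (1 - z.2) *: z.1)
  (fun z : 'rV[R]_n * R => z.2 *: retraction z.1)).
  apply: (@continuousZ R _ _ (fun z : 'rV[R]_n * R => 1 - z.2) fst); last exact: cvg_fst.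
  by apply: (@continuousB R R^o _ (fun=> 1) snd); [exact: cst_continuous | exact: cvg_snd].
apply: (@continuousZ R _ _ snd (fun z => retraction z.1)); first exact: cvg_snd.
by apply: continuous_comp; [exact: cvg_fst | exact: continuous_retraction].
Qed.

Lemma closed_staircases_sdr : strong_def_retract R X closed_staircases.
Proof.
split=> [y []//|]; exists (fun z => homotopy z.1 z.2); split; [|split; [|split; [|split]]].
- by apply: continuous_subspaceT => z; exact: continuous_homotopy.
- by move=> x t Xx /=; rewrite in_itv /=; exact: homotopy_realization.
- by move=> x _ /=; rewrite homotopy0.
- by move=> x Xx /=; rewrite homotopy1; exact: retraction_closed.
- by move=> y t y_closed _ /=; rewrite /homotopy retraction_id // -scalerDl subrK scale1r.
Qed.

Definition nsubsets := #|{: {set 'I_n}}|.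
Definition subset_at (l : 'I_nsubsets) : {set 'I_n} := enum_val l.
Definition subset_index (t : {set 'I_n}) : 'I_nsubsets := enum_rank t.

Lemma subset_atK : cancel subset_at subset_index. Proof. exact: enum_valK. Qed.
Lemma subset_indexK : cancel subset_index subset_at. Proof. exact: enum_rankK. Qed.

Lemma sum_subset_at (F : {set 'I_n} -> R) : \sum_l F (subset_at l) = \sum_t F t.
Proof.
rewrite (reindex subset_at) //.
by exists subset_index => l _; [exact: subset_atK | exact: subset_indexK].
Qed.

Lemma sum_subset_index (F : 'I_nsubsets -> R) : \sum_t F (subset_index t) = \sum_l F l.
Proof.
rewrite (reindex subset_index) //.
by exists subset_at => l _; [exact: subset_indexK | exact: subset_atK].
Qed.

Definition closed_face s := [&& s != set0, closure s == s & has_nbr s].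

Definition closed_face_chains : {set {set 'I_nsubsets}} :=
  [set S : {set 'I_nsubsets} | [forall l in S, closed_face (subset_at l)]
     && [forall l in S, forall l' in S,
           (subset_at l \subset subset_at l') || (subset_at l' \subset subset_at l)]].

Lemma closed_face_chainsP S : S \in closed_face_chains ->
  (forall l, l \in S -> [/\ subset_at l != set0, closure (subset_at l) = subset_at l
                          & has_nbr (subset_at l)]) /\
  (forall l l', l \in S -> l' \in S ->
     (subset_at l \subset subset_at l') || (subset_at l' \subset subset_at l)).
Proof.
rewrite inE => /andP [/forall_inP faces /forall_inP chain]; split.
  by move=> l /faces /and3P [-> /eqP -> ->].
by move=> l l' /chain /forall_inP /[apply].
Qed.

Lemma closed_face_chains_complex : simplicial_complex closed_face_chains.
Proof.
move=> S S' /closed_face_chainsP [faces chain] S'S; rewrite inE; apply/andP; split.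
  apply/forall_inP => l /(subsetP S'S) /faces [sn cl face].
  by rewrite /closed_face sn cl eqxx face.
by apply/forall_inP => l lS'; apply/forall_inP => l' l'S'; apply: chain; exact: (subsetP S'S).
Qed.

Lemma closed_face_chains_dim j k : (0 < j)%N -> (0 < k)%N -> biclique_free (adj E) j k ->
  dim_le_succ closed_face_chains (j + k - 2).
Proof.
move=> j0 k0 noK S /closed_face_chainsP [faces chain].
rewrite -(card_imset S (can_inj subset_atK)).
apply: (card_closed_face_chain j0 k0 noK) => [t|s t] /imsetP [l lS ->].
  exact: faces.
by case/imsetP => l' l'S ->; exact: chain.
Qed.

Local Notation D := (realization (R:=R) closed_face_chains).

(* The barycentric coordinate of a chain element t is #|t| times the height
   of the step at t. *)
Definition to_chains y : 'rV[R]_nsubsets :=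
  \row_l (#|subset_at l|%:R * gap (coords y) (subset_at l)).
Definition chain_weight (z : 'rV[R]_nsubsets) t : R := z ord0 (subset_index t) / #|t|%:R.
Definition of_chains (z : 'rV[R]_nsubsets) : 'rV[R]_n :=
  \row_i indicator_sum (chain_weight z) i.

Lemma coords_of_chains z : coords (of_chains z) = indicator_sum (chain_weight z).
Proof. by apply: funext => i; rewrite /coords mxE. Qed.

Lemma chain_weight_ge0 z t : D z -> 0 <= chain_weight z t.
Proof. by case=> z_ge0 _; rewrite /chain_weight divr_ge0. Qed.

Lemma chain_weight_set0 z : chain_weight z set0 = 0.
Proof. by rewrite /chain_weight cards0 invr0 mulr0. Qed.

Lemma chain_weight_neq0 z t : chain_weight z t != 0 -> z ord0 (subset_index t) != 0.
Proof. by rewrite /chain_weight mulf_eq0 negb_or => /andP []. Qed.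

Lemma chain_weightK z t : D z -> chain_weight z t * #|t|%:R = z ord0 (subset_index t).
Proof.
case=> _ [_ /closed_face_chainsP [faces _]]; have [->|tn] := eqVneq t set0; last first.
  by rewrite /chain_weight mulfVK // pnatr_eq0 cards_eq0.
rewrite cards0 mulr0; apply/esym/eqP/negPn/negP => z0.
by have [] := faces (subset_index set0); rewrite ?inE // subset_indexK eqxx.
Qed.

Lemma chain_weight_chain z : D z -> chain_supported (chain_weight z).
Proof.
case=> _ [_ /closed_face_chainsP [_ chain]] s t /chain_weight_neq0 zs /chain_weight_neq0 zt.
by have := chain (subset_index s) (subset_index t); rewrite !subset_indexK; apply; rewrite inE.
Qed.

Lemma to_chains_realization y : closed_staircases y -> D (to_chains y).
Proof.
case=> Xy y_closed; have y01 := realization_unit_cube Xy.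
have gap_pos l : to_chains y ord0 l != 0 -> 0 < gap (coords y) (subset_at l).
  by rewrite mxE mulf_eq0 negb_or gap_gt0E => /andP [].
split; [|split].
- by move=> l; rewrite mxE mulr_ge0 ?gap_ge0.
- under eq_bigr => l _ do rewrite mxE.
  rewrite (sum_subset_at (fun t => #|t|%:R * gap (coords y) t)).
  have y_sum : \sum_i coords y i = 1 by case: Xy => _ [].
  rewrite -[RHS]y_sum -[in RHS](indicator_sum_gap y01).
  by rewrite sum_indicator_sum; apply: eq_bigr => t _; rewrite mulrC.
rewrite inE; apply/andP; split.
  apply/forall_inP => l; rewrite inE => /gap_pos gl.
  have [sn _ _] := gap_gt0P gl; rewrite /closed_face sn (y_closed _ gl) eqxx /=.
  apply: (has_common_nbrS (gap_gt0_sub_support gl)).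
  by rewrite -mem_nbhd_complex; case: Xy => _ [].
apply/forall_inP => l; rewrite inE => /gap_pos gl; apply/forall_inP => l'.
by rewrite inE => /gap_pos gl'; exact: gap_gt0_chain gl gl'.
Qed.

Lemma of_chains_closed z : D z -> closed_staircases (of_chains z).
Proof.
move=> Dz; have Dz' := Dz; case: Dz' => z_ge0 [z_sum /closed_face_chainsP [faces chain]].
have w_ge0 t := chain_weight_ge0 t Dz.
have sum_of_chains : \sum_i coords (of_chains z) i = 1.
  rewrite coords_of_chains sum_indicator_sum (eq_bigr _ (fun t _ => chain_weightK t Dz)).
  by rewrite (sum_subset_index (fun l => z ord0 l)).
have Xg : X (of_chains z).
  split; [|split].
  - by move=> i; rewrite mxE indicator_sum_ge0.
  - by rewrite -sum_of_chains.
  have Sn : [set t | chain_weight z t != 0] != set0.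
    apply: contra_neq (oner_neq0 R) => S0; rewrite -sum_of_chains big1 // => i _.
    by rewrite coords_of_chains /indicator_sum big1 // => t _; rewrite (nonzero_set0 S0) mul0r.
  have [s0 s0S s0_max] : exists2 s0, s0 \in [set t | chain_weight z t != 0] &
      forall t, t \in [set t | chain_weight z t != 0] -> t \subset s0.
    by apply: chain_has_max Sn => s t; rewrite !inE; exact: chain_weight_chain.
  rewrite mem_nbhd_complex; apply: (has_common_nbrS (s := s0)).
    apply/subsetP => i; rewrite inE -/(coords _ i) coords_of_chains.
    by case/indicator_sum_neq0 => t wt it; apply: (subsetP (s0_max t _)); rewrite ?inE.
  move: s0S; rewrite inE => /chain_weight_neq0 zs0.
  have s0z : subset_index s0 \in [set l | z ord0 l != 0] by rewrite inE.
  by have [_ _] := faces _ s0z; rewrite subset_indexK.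
have g01 := realization_unit_cube Xg; rewrite coords_of_chains in g01.
split=> // t; rewrite coords_of_chains.
rewrite gap_indicator_sum ?chain_weight_set0 //; last exact: chain_weight_chain.
rewrite lt0r => /andP [/chain_weight_neq0 zt _].
have tz : subset_index t \in [set l | z ord0 l != 0] by rewrite inE.
by have [_] := faces _ tz; rewrite subset_indexK.
Qed.

Lemma gap_of_chains z : D z -> gap (coords (of_chains z)) =1 chain_weight z.
Proof.
move=> Dz; have [Xg _] := of_chains_closed Dz; have g01 := realization_unit_cube Xg.
rewrite coords_of_chains in g01 *.
apply: gap_indicator_sum => //; [move=> t; exact: chain_weight_ge0
  | exact: chain_weight_set0 | exact: chain_weight_chain].
Qed.

Lemma of_chainsK y : closed_staircases y -> of_chains (to_chains y) = y.
Proof.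
case=> Xy _; have y01 := realization_unit_cube Xy.
have weight_gap : chain_weight (to_chains y) = gap (coords y).
  apply: funext => t; rewrite /chain_weight mxE subset_indexK.
  have [->|tn] := eqVneq t set0; first by rewrite gap_set0 cards0 !mul0r.
  by rewrite mulrC mulKf // pnatr_eq0 cards_eq0.
by apply/rowP => i; rewrite mxE weight_gap indicator_sum_gap.
Qed.

Lemma to_chainsK z : D z -> to_chains (of_chains z) = z.
Proof.
move=> Dz; apply/rowP => l; rewrite mxE gap_of_chains // mulrC chain_weightK //.
by rewrite subset_atK; congr (z _ l); apply: val_inj.
Qed.

Lemma continuous_to_chains : continuous to_chains.
Proof.
apply: continuous_mx => i l; under eq_fun do rewrite mxE.
move=> y; apply: (@continuousM R _ (fun=> _) (fun y => gap (coords y) (subset_at l))).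
  exact: cst_continuous.
exact: continuous_gap.
Qed.

Lemma continuous_of_chains : continuous of_chains.
Proof.
apply: continuous_mx => i j; under eq_fun do rewrite mxE.
apply: continuous_sum => t y.
apply: (@continuousM R _ (chain_weight^~ t) (fun=> _)); last exact: cst_continuous.
apply: (@continuousM R _ (fun z : 'rV[R]_nsubsets => z ord0 (subset_index t)) (fun=> _)).
  exact: coord_continuous.
exact: cst_continuous.
Qed.

Lemma closed_staircases_homeomorphic : homeomorphic closed_staircases D.
Proof.
exists to_chains, of_chains; split; [|split; [|split; [|split; [|split]]]].
- by apply: continuous_subspaceT; exact: continuous_to_chains.
- by apply: continuous_subspaceT; exact: continuous_of_chains.
- exact: to_chains_realization.
- exact: of_chains_closed.
- exact: of_chainsK.
- exact: to_chainsK.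
Qed.

Theorem nbhd_complex_sdr_low_dim j k : (0 < j)%N -> (0 < k)%N ->
  biclique_free (adj E) j k -> sdr_onto_complex_dim R E (j + k - 2).
Proof.
move=> j0 k0 noK; exists closed_staircases; split; first exact: closed_staircases_sdr.
exists nsubsets, closed_face_chains; split; first exact: closed_face_chains_complex.
split; first exact: closed_face_chains_dim.
exact: closed_staircases_homeomorphic.
Qed.

End Retraction.

Lemma ler_sum_subpred (R : numDomainType) (I : finType) (P Q : pred I) (F : I -> R) :
  (forall i, 0 <= F i) -> (forall i, P i -> Q i) ->
  \sum_(i | P i) F i <= \sum_(i | Q i) F i.
Proof.
move=> F_ge0 PQ; rewrite [leRHS](bigID P) /= (eq_bigl P) ?lerDl ?sumr_ge0 // => i.
by apply/andP/idP => [[]|Pi] //; rewrite PQ.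
Qed.

Section RandomGraph.
Variables (R : realType) (n : nat) (p : R).
Hypothesis p01 : 0 <= p <= 1.
Implicit Types (E : {set {set 'I_n}}) (S T : {set 'I_n}).

Local Notation weight := (bernoulli_weight p (pairs n)).

Lemma weight_ge0 E : 0 <= weight E.
Proof. by case/andP: p01 => p0 p1; rewrite mulr_ge0 ?exprn_ge0 ?subr_ge0. Qed.

Lemma gnp_prob_le1 (P : {set {set 'I_n}} -> Prop) : gnp_prob p P <= 1.
Proof.
rewrite /gnp_prob -[leRHS](sum_bernoulli_weight p (pairs n)).
by apply: ler_sum_subpred => [E|E /andP []//]; exact: weight_ge0.
Qed.

Lemma gnp_prob_compl (P : {set {set 'I_n}} -> Prop) :
  1 - gnp_prob p P = \sum_(E | is_graph E && ~~ `[< P E >]) weight E.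
Proof.
rewrite -[X in X - _](sum_bernoulli_weight p (pairs n)) (bigID (fun E => `[< P E >])) /=.
by rewrite addrC addrK.
Qed.

Definition biclique_edges S T : {set {set 'I_n}} := [set [set uv.1; uv.2] | uv in setX S T].

Lemma card_biclique_edges S T : biclique_edges S T \subset pairs n ->
  #|biclique_edges S T| = (#|S| * #|T|)%N.
Proof.
move=> ST_pairs; have ST_disj u : u \in S -> u \in T -> False.
  move=> uS uT; have : [set u; u] \in biclique_edges S T.
    by apply/imsetP; exists (u, u); rewrite // inE uS uT.
  by move/(subsetP ST_pairs); rewrite inE finset.setUid cards1.
rewrite card_in_imset ?cardsX // => [[a b] [a' b']]; rewrite !inE /=.
move=> /andP [aS bT] /andP [a'S b'T] ab_eq.
have aab : a \in [set a'; b'] by rewrite -ab_eq !inE eqxx.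
have bab : b \in [set a'; b'] by rewrite -ab_eq !inE eqxx orbT.
move: aab bab; rewrite !inE => /orP [/eqP ->|/eqP ab']; last by case: (ST_disj a aS); rewrite ab'.
by move=> /orP [/eqP ba'|/eqP ->] //; case: (ST_disj b); rewrite // ba'.
Qed.

Lemma sum_weight_biclique S T : 
  \sum_(E | is_graph E && (biclique_edges S T \subset E)) weight E <= p ^+ (#|S| * #|T|).
Proof.
have [ST_pairs|ST_npairs] := boolP (biclique_edges S T \subset pairs n).
  by rewrite (sum_bernoulli_weight_supsets p ST_pairs) card_biclique_edges.
rewrite big_pred0 ?exprn_ge0 //; first by case/andP: p01.
move=> E; apply/negP => /andP [EG STE]; move/negP: ST_npairs; apply.
exact: subset_trans STE EG.
Qed.

Lemma sum_draws (j : nat) (c : R) : \sum_(S : {set 'I_n} | #|S| == j) c = 'C(n, j)%:R * c.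
Proof.
rewrite (eq_bigl (fun S => S \in [set S : {set 'I_n} | #|S| == j])); last first.
  by move=> S; rewrite inE.
by rewrite sumr_const card_draws card_ord mulr_natl.
Qed.

Lemma biclique_edges_sub E S T :
  (forall u v, u \in S -> v \in T -> adj E u v) -> biclique_edges S T \subset E.
Proof. by move=> ST_adj; apply/subsetP => _ /imsetP [[u v] /setXP [uS vT] ->]; exact: ST_adj. Qed.

Lemma prob_biclique_le (j k : nat) :
  \sum_(E | is_graph E && ~~ `[< biclique_free (adj E) j k >]) weight E
    <= 'C(n, j)%:R * 'C(n, k)%:R * p ^+ (j * k).
Proof.
pose c E S T := (biclique_edges S T \subset E)%:R * weight E.
pose count E := \sum_(S : {set 'I_n} | #|S| == j) \sum_(T : {set 'I_n} | #|T| == k) c E S T.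
have c_ge0 E S T : 0 <= c E S T by rewrite mulr_ge0 ?weight_ge0.
have count_ge0 E : 0 <= count E by do 2!apply: sumr_ge0 => ? _.
apply: (@le_trans _ _ (\sum_(E | is_graph E) count E)).
  have graph_sub E : is_graph E && ~~ `[< biclique_free (adj E) j k >] -> is_graph E.
    by case/andP.
  apply: le_trans (ler_sum_subpred count_ge0 graph_sub).
  apply: ler_sum => E /andP [_ /asboolPn /contrapT [S [T [Sj Tk ST_adj]]]].
  rewrite /count (bigD1 S) ?Sj ?eqxx //= (bigD1 T) ?Tk ?eqxx //=.
  rewrite /c biclique_edges_sub // mul1r -addrA lerDl.
  by rewrite addr_ge0 //; do ?[apply: sumr_ge0 => ? _]; rewrite mulr_ge0 ?weight_ge0.
rewrite exchange_big /=.
apply: (@le_trans _ _ (\sum_(S : {set 'I_n} | #|S| == j)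
  \sum_(T : {set 'I_n} | #|T| == k) p ^+ (j * k))); last by rewrite !sum_draws mulrA.
apply: ler_sum => S /eqP Sj; rewrite exchange_big /=; apply: ler_sum => T /eqP Tk.
rewrite -Sj -Tk; apply: le_trans (sum_weight_biclique S T).
rewrite [leRHS]big_mkcondr /=; apply: ler_sum => E _.
by rewrite /c; case: (_ \subset E); rewrite ?mul1r ?mul0r.
Qed.

End RandomGraph.

Unset Implicit Arguments.
Local Open Scope classical_set_scope.

Theorem theorem2p2 (R : realType) (p : nat -> R) (j k : nat -> nat)
  (hp : forall n, 0 <= p n <= 1)
  (hj : forall n, (0 < j n)%N) (hk : forall n, (0 < k n)%N)
  (hlim : (fun n => 'C(n, j n)%:R * 'C(n, k n)%:R * p n ^+ (j n * k n)) @ \oo --> (0 : R)) :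
  (fun n => gnp_prob (p n) (fun E => @sdr_onto_complex_dim R n E (j n + k n - 2))) @ \oo
    --> (1 : R).
Proof.
set b := fun n => 'C(n, j n)%:R * 'C(n, k n)%:R * p n ^+ (j n * k n) in hlim.
apply: (@squeeze_cvgr _ _ _ _ (fun n => 1 - b n) (fun=> 1)); last exact: cvg_cst.
  apply: filterE => n; rewrite gnp_prob_le1 // andbT lerBlDr addrC -lerBlDr.
  rewrite gnp_prob_compl //; apply: le_trans (prob_biclique_le n (hp n) (j n) (k n)).
  apply: ler_sum_subpred => [E|E /andP [EG not_sdr]]; first exact: weight_ge0.
  rewrite EG; apply/asboolPn => bf; move/asboolPn: not_sdr; apply.
  exact: nbhd_complex_sdr_low_dim.
by rewrite -[X in _ --> X](subr0 1); apply: cvgB => //; exact: cvg_cst.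
Qed.
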